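(* Let $r \ge 1$ and let $E, B \subseteq \mathbb{R}^r$ be axis-aligned bounding boxes. Then the function $g : \mathbb{R}^r \to \mathbb{R}$ defined by $g(p) = \mathrm{MaxDist}(p, E)^2 - \mathrm{MinDist}(p, B)^2$ is convex.
   Context: An axis-aligned bounding box (AABB) in $\mathbb{R}^r$ is a set $M = \prod_{d=1}^r [\check{M}_d, \hat{M}_d]$ with real numbers $\check{M}_d \le \hat{M}_d$ for each $d$. $\mathrm{dist}$ is the Euclidean distance on $\mathbb{R}^r$. For a point $p$ and an AABB $M$, $\mathrm{MaxDist}(p, M) = \max_{q \in M} \mathrm{dist}(p, q)$ and $\mathrm{MinDist}(p, M) = \min_{q \in M} \mathrm{dist}(p, q)$. *)

From mathcomp Require Import all_boot all_order all_algebra.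
From mathcomp Require Import all_classical all_reals.
Set Implicit Arguments. Unset Strict Implicit. Unset Printing Implicit Defensive.
Import Order.TTheory GRing.Theory Num.Theory.
Local Open Scope ring_scope.
Local Open Scope classical_set_scope.

Definition dist (R : realType) (r : nat) (p q : 'rV[R]_r) : R :=
  Num.sqrt (\sum_(d < r) (p 0 d - q 0 d) ^+ 2).

Definition aabb (R : realType) (r : nat) (lo hi : 'rV[R]_r) : set 'rV[R]_r :=
  [set q | forall d : 'I_r, lo 0 d <= q 0 d <= hi 0 d].

(* MaxDist / MinDist: sup / inf of the distances to points of the box
   (attained since the box is compact and nonempty). *)
Definition MaxDist (R : realType) (r : nat) (p : 'rV[R]_r) (M : set 'rV[R]_r) : R :=
  sup [set dist p q | q in M].
Definition MinDist (R : realType) (r : nat) (p : 'rV[R]_r) (M : set 'rV[R]_r) : R :=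
  inf [set dist p q | q in M].

Definition convex_fun (R : realType) (r : nat) (g : 'rV[R]_r -> R) : Prop :=
  forall (p q : 'rV[R]_r) (t : R), 0 <= t <= 1 ->
    g (t *: p + (1 - t) *: q) <= t * g p + (1 - t) * g q.

(** For e in E and b in B the map p |-> |p - e|^2 - |p - b|^2 is affine in p,
    since the quadratic terms |p|^2 cancel.  The function
    MaxDist(p, E)^2 - MinDist(p, B)^2 is the supremum of these affine maps over
    all pairs (e, b), and a supremum of affine functions is convex. *)

From mathcomp Require Import all_boot all_order all_algebra.
From mathcomp Require Import all_classical all_reals.
From mathcomp Require Import ring lra.
Set Implicit Arguments. Unset Strict Implicit.
Import Order.TTheory GRing.Theory Num.Theory.
Local Open Scope ring_scope.
Local Open Scope classical_set_scope.

Section SquaredDistance.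
Variables (R : realType) (r : nat).
Implicit Types (p q s e b lo hi : 'rV[R]_r) (M N : set 'rV[R]_r).

Definition sqdist p q : R := \sum_(d < r) (p 0 d - q 0 d) ^+ 2.

Lemma sqdist_ge0 p q : 0 <= sqdist p q.
Proof. by apply: sumr_ge0 => d _; rewrite sqr_ge0. Qed.

Lemma dist_ge0 p q : 0 <= dist p q.
Proof. exact: sqrtr_ge0. Qed.

Lemma sqr_dist p q : dist p q ^+ 2 = sqdist p q.
Proof. by rewrite /dist sqr_sqrtr // sqdist_ge0. Qed.

Lemma sqdistB_affine p s e b t :
  sqdist (t *: p + (1 - t) *: s) e - sqdist (t *: p + (1 - t) *: s) b =
  t * (sqdist p e - sqdist p b) + (1 - t) * (sqdist s e - sqdist s b).
Proof.
rewrite /sqdist -!sumrB !mulr_sumr -big_split; apply: eq_bigr => d _ /=.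
by rewrite !mxE; ring.
Qed.

Lemma sqdist_le_MaxDist_sqr p M e :
  has_ubound [set dist p q | q in M] -> M e ->
  sqdist p e <= MaxDist p M ^+ 2.
Proof.
move=> ubM Me; rewrite -sqr_dist.
have le_dist_sup : dist p e <= MaxDist p M.
  exact: ub_le_sup ubM _ (ex_intro2 _ _ e Me erefl).
rewrite ler_sqr ?nnegrE ?dist_ge0 //.
exact: le_trans (dist_ge0 p e) le_dist_sup.
Qed.

Lemma MinDist_sqr_le_sqdist p N b :
  N b -> MinDist p N ^+ 2 <= sqdist p b.
Proof.
move=> Nb; rewrite -sqr_dist.
have MinDist_ge0 : 0 <= MinDist p N.
  by apply: lb_le_inf; [exists (dist p b), b | move=> _ [q _ <-]; exact: dist_ge0].
have lbN : has_lbound [set dist p q | q in N].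
  by exists 0 => _ [q _ <-]; exact: dist_ge0.
rewrite ler_sqr ?nnegrE ?dist_ge0 //.
exact: ge_inf lbN _ (ex_intro2 _ _ b Nb erefl).
Qed.

Lemma MaxDist_sqr_le p M c :
  M !=set0 -> (forall e, M e -> sqdist p e <= c) -> MaxDist p M ^+ 2 <= c.
Proof.
move=> [e0 Me0] le_c.
have c_ge0 : 0 <= c by apply: le_trans (sqdist_ge0 p e0) (le_c e0 Me0).
have dist_le e : M e -> dist p e <= Num.sqrt c.
  by move=> Me; apply: ler_wsqrtr; exact: le_c.
have le_sqrt : MaxDist p M <= Num.sqrt c.
  by apply: ge_sup; [exists (dist p e0), e0 | move=> _ [e Me <-]; exact: dist_le].
have ge0 : 0 <= MaxDist p M.
  apply: le_trans (dist_ge0 p e0) _.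
  apply: ub_le_sup; last by exists e0.
  by exists (Num.sqrt c) => _ [e Me <-]; exact: dist_le.
by rewrite -[c]sqr_sqrtr // ler_sqr ?nnegrE ?sqrtr_ge0.
Qed.

Lemma le_MinDist_sqr p N c :
  N !=set0 -> (forall b, N b -> c <= sqdist p b) -> c <= MinDist p N ^+ 2.
Proof.
move=> [b0 Nb0] c_le; case: (lerP c 0) => [c_le0 | c_gt0].
  by apply: le_trans c_le0 _; exact: sqr_ge0.
have le_inf : Num.sqrt c <= MinDist p N.
  apply: lb_le_inf; first by exists (dist p b0), b0.
  by move=> _ [b Nb <-]; apply: ler_wsqrtr; exact: c_le.
rewrite -{1}(sqr_sqrtr (ltW c_gt0)) ler_sqr ?nnegrE ?sqrtr_ge0 //.
exact: le_trans (sqrtr_ge0 c) le_inf.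
Qed.

Lemma MaxDist_sqrB_MinDist_sqr_le p M N C :
  M !=set0 -> N !=set0 ->
  (forall e b, M e -> N b -> sqdist p e - sqdist p b <= C) ->
  MaxDist p M ^+ 2 - MinDist p N ^+ 2 <= C.
Proof.
move=> M0 N0 le_C.
suff : MaxDist p M ^+ 2 - C <= MinDist p N ^+ 2 by lra.
apply: le_MinDist_sqr => // b Nb.
suff : MaxDist p M ^+ 2 <= C + sqdist p b by lra.
apply: MaxDist_sqr_le => // e Me.
by have := le_C e b Me Nb; lra.
Qed.

Theorem convex_MaxDist_sqrB_MinDist_sqr M N :
  M !=set0 -> N !=set0 -> (forall p, has_ubound [set dist p q | q in M]) ->
  convex_fun (fun p => MaxDist p M ^+ 2 - MinDist p N ^+ 2).
Proof.
move=> M0 N0 ubM p s t /andP [t_ge0 t_le1].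
apply: MaxDist_sqrB_MinDist_sqr_le => // e b Me Nb.
rewrite sqdistB_affine.
have t'_ge0 : 0 <= 1 - t by rewrite subr_ge0.
apply: lerD; apply: ler_wpM2l => //; apply: lerB.
- exact: sqdist_le_MaxDist_sqr.
- exact: MinDist_sqr_le_sqdist.
- exact: sqdist_le_MaxDist_sqr.
- exact: MinDist_sqr_le_sqdist.
Qed.

Lemma aabb_lo lo hi : (forall d, lo 0 d <= hi 0 d) -> aabb lo hi lo.
Proof. by move=> le_lohi d; rewrite lexx le_lohi. Qed.

Lemma aabb_dist_bounded p lo hi : has_ubound [set dist p q | q in aabb lo hi].
Proof.
(* For lo <= q <= hi, (p - q)^2 <= max ((p - lo)^2, (p - hi)^2). *)
exists (Num.sqrt (\sum_(d < r) ((p 0 d - lo 0 d) ^+ 2 + (p 0 d - hi 0 d) ^+ 2))).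
move=> _ [q q_in <-]; apply: ler_wsqrtr; apply: ler_sum => d _.
have /andP [lo_q q_hi] := q_in d.
have : 0 <= (q 0 d - lo 0 d) * (hi 0 d - q 0 d) by apply: mulr_ge0; rewrite subr_ge0.
have := sqr_ge0 (p 0 d - lo 0 d - hi 0 d + q 0 d).
nra.
Qed.

End SquaredDistance.

Theorem lemma4p4 (R : realType) (r : nat) (hr : (1 <= r)%N)
  (Elo Ehi Blo Bhi : 'rV[R]_r)
  (hE : forall d : 'I_r, Elo 0 d <= Ehi 0 d)
  (hB : forall d : 'I_r, Blo 0 d <= Bhi 0 d) :
  convex_fun (fun p : 'rV[R]_r =>
    MaxDist p (aabb Elo Ehi) ^+ 2 - MinDist p (aabb Blo Bhi) ^+ 2).
Proof.
apply: convex_MaxDist_sqrB_MinDist_sqr => [||p].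
- by exists Elo; exact: aabb_lo.
- by exists Blo; exact: aabb_lo.
- exact: aabb_dist_bounded.
Qed.
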